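(* Let $g\ge1$ be an integer and let $\mathcal S\subseteq\mathbb N$ be a $\mathcal D[g]$ set. Then, as $n\to\infty$, $$|\mathcal S(n)|\ \le\ \log_2 n+\frac12\log_2\log_2 n+\log_2 g-\log_2\left(\sqrt{\frac2\pi}\right)+o(1),$$ where $\mathcal S(n):=\mathcal S\cap[1,n]$.
   Context: For a positive integer $g$, a set $\mathcal S=\{a_1<a_2<\cdots\}\subset\mathbb N$ is a $\mathcal D[g]$ set if for every $m$ (for which $a_m$ exists) and every $t\in\mathbb Z$, $$\left|\left\{I\subseteq\{1,\dots,m\}:\ \sum_{i\in I}a_i=t\right\}\right|\le g.$$ *)

From mathcomp Require Import all_boot.
From Stdlib Require Import Reals.

Set Implicit Arguments.
Unset Strict Implicit.
Unset Printing Implicit Defensive.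

Definition prefix_set (S : pred nat) (n : nat) : {set 'I_n.+1} :=
  [set i : 'I_n.+1 | S i].

Definition Sn (S : pred nat) (n : nat) : {set 'I_n.+1} :=
  [set i : 'I_n.+1 | (0 < i)%N && S i].

Definition nreps (n : nat) (A : {set 'I_n.+1}) (t : nat) : nat :=
  #|[set I : {set 'I_n.+1} | (I \subset A) && ((\sum_(i in I) (i : nat))%N == t)]|.

(* D[g] sets: every initial segment {a_1,...,a_m} of S (these are exactly the
   sets S ∩ [0,n], n ∈ ℕ) has at most g subsets with any prescribed sum t.
   Sums are nonnegative, so t ranging over ℕ is the same as over ℤ. *)
Definition D_set (g : nat) (S : pred nat) : Prop :=
  forall n t : nat, (nreps (prefix_set S n) t <= g)%N.

Definition log2 (x : R) : R := (ln x / ln 2)%R.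

(* Let K = |S(n)| and let a_1 < ... < a_K be the elements of S(n).  By Erdos'
   argument for the Littlewood-Offord problem, at least C(K, K/2) of the 2^K
   signed sums +-a_1 +- ... +-a_K lie in (-n, n] (all a_i are at most n).  A
   signed sum equals 2 (sum of a_i over I) - (sum of all a_i) for a subset I, so
   those in (-n, n] take at most n values, each attained by at most g subsets I
   since S is a D[g] set: C(K, K/2) <= g n.  Wallis' integrals give
   C(K, K/2)^2 >= 2 4^K / (pi (K + 2)), hence
   K <= log2 n + log2 g + log2 (pi / 2) / 2 + log2 (K + 2) / 2,
   and this bound itself forces K + 2 <= (1 + o(1)) log2 n. *)

From Stdlib Require Import Reals Lra Lia.
From mathcomp Require Import all_boot all_algebra zify.
From Coquelicot Require Coquelicot.

Set Implicit Arguments.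
Unset Strict Implicit.
Unset Printing Implicit Defensive.

Lemma sum_ord_interval m c d :
  c <= d -> \sum_(t < m) (c <= t < d) = minn m d - minn m c.
Proof.
move=> le_cd; elim: m => [|m IHm]; first by rewrite big_ord0 !min0n.
by rewrite big_ord_recr /= IHm; lia.
Qed.

Lemma sum_parity_window_le m s M : \sum_(t < m) ((s < 2 * t + M) && (2 * t <= s + M)) <= M.
Proof.
pose c := (s + 2 - M) %/ 2.
(* The [t] counted lie in [[c, c + M)]. *)
apply: leq_trans (_ : \sum_(t < m) (c <= t < c + M) <= M); last first.
  by rewrite sum_ord_interval ?leq_addr //; lia.
by apply: leq_sum => t _; rewrite /c; lia.
Qed.

Lemma sum_by_fibres (D : finType) (P : {pred D}) (h : D -> nat) (f : nat -> nat) m :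
  {in P, forall x, h x < m} ->
  \sum_(x in P) f (h x) = \sum_(t < m) #|[set x in P | h x == t]| * f t.
Proof.
move=> h_lt; transitivity (\sum_(x in P) \sum_(t < m | t == h x :> nat) f t).
  by apply: eq_bigr => x Px; rewrite big_ord1_eq h_lt.
rewrite (exchange_big_dep xpredT) //; apply: eq_bigr => t _.
rewrite sum_nat_const; congr (_ * _); apply: eq_card => x.
by rewrite !inE eq_sym.
Qed.

Lemma sum_binS k (f : nat -> nat) :
  \sum_(t < k.+2) 'C(k.+1, t) * f t = \sum_(t < k.+1) 'C(k, t) * (f t + f t.+1).
Proof.
rewrite big_ord_recl bin0 mul1n.
under eq_bigr => t _ do rewrite /bump /= binS mulnDl.
under [RHS]eq_bigr => t _ do rewrite mulnDr.
rewrite !big_split /= addnA; congr (_ + _).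
rewrite [RHS]big_ord_recl bin0 mul1n big_ord_recr /= bin_small // mul0n addn0.
by congr (_ + _); apply: eq_bigr.
Qed.

(* The number of [k]-step walks with steps [+1]/[-1] ending in [[-j, j)];
   [t] counts the [+1] steps. *)
Definition nwalks (k j : nat) : nat :=
  \sum_(t < k.+1) 'C(k, t) * ((k <= 2 * t + j) && (2 * t < k + j)).

Lemma nwalks0n j : nwalks 0 j = (0 < j).
Proof. by rewrite /nwalks big_ord1 bin0 mul1n; case: j. Qed.

Lemma nwalks0 k : nwalks k 0 = 0.
Proof. by apply/eqP; rewrite sum_nat_eq0; apply/forallP => t; lia. Qed.

(* Splitting on the last step, the walks ending in [[-j-1, j+1)] are counted by
   the walks of length [k] ending in [[-j-2, j)] plus those ending in [[-j, j+2)],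
   and these two intervals have the same total count as [[-j-2, j+2)] and [[-j, j)]. *)
Lemma nwalksSS k j : nwalks k.+1 j.+1 = nwalks k j.+2 + nwalks k j.
Proof.
rewrite /nwalks (sum_binS k (fun t => (k.+1 <= 2 * t + j.+1) && (2 * t < k.+1 + j.+1))).
rewrite -big_split /=; apply: eq_bigr => t _.
by rewrite -mulnDr; congr (_ * _); lia.
Qed.

Lemma mid_binomial_le_nwalks k : 'C(k, k./2) <= nwalks k 1.
Proof.
have mid_lt : k./2 < k.+1 by rewrite ltnS; lia.
rewrite /nwalks (bigD1 (Ordinal mid_lt)) //= -[X in X <= _]muln1.
by apply: leq_trans (leq_addr _ _); rewrite leq_mul2l; apply/orP; right; lia.
Qed.

Lemma sum_powersetD1 (T : finType) (F : {set T} -> nat) (A : {set T}) a : a \in A ->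
  \sum_(I in powerset A) F I = \sum_(J in powerset (A :\ a)) (F J + F (a |: J)).
Proof.
move=> aA; rewrite (big_setID [set I : {set T} | a \in I]) /= big_split /= addnC.
congr (_ + _).
  by apply: eq_bigl => I; rewrite !inE subsetD1 andbC.
rewrite -(big_imset _ (h := setU [set a])); last first.
  move=> J1 J2; rewrite !powersetE !subsetD1 => /andP[_ aJ1] /andP[_ aJ2] eqJ.
  by rewrite -(setU1K aJ1) -(setU1K aJ2) eqJ.
apply: eq_bigl => I; rewrite !inE; apply/andP/imsetP => [[sIA aI]|[J]].
  by exists (I :\ a); rewrite ?setD1K // inE setSD.
rewrite inE subsetD1 => /andP[sJA aJ] ->.
by rewrite setU11 subUset sub1set aA (subset_trans sJA) // subD1set.
Qed.

Section SignedSubsetSums.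
Variables (T : finType) (w : T -> nat).
Local Open Scope ring_scope.

Definition wsum (I : {set T}) : nat := (\sum_(i in I) w i)%N.

(* For [I \subset A] this is [wsum I - wsum (A :\: I)]. *)
Definition signed_sum (A I : {set T}) : int := 2 * (wsum I)%:Z - (wsum A)%:Z.

Definition window_count (A : {set T}) (lo hi : int) : nat :=
  (\sum_(I in powerset A) (lo < signed_sum A I <= hi)%R)%N.

Lemma wsumU1 a (J : {set T}) : a \notin J -> wsum (a |: J) = (w a + wsum J)%N.
Proof. by move=> aJ; rewrite /wsum big_setU1. Qed.

Lemma wsumD1 a (A : {set T}) : a \in A -> wsum A = (w a + wsum (A :\ a))%N.
Proof. by move=> aA; rewrite /wsum (big_setD1 a aA). Qed.

Lemma window_count_split (A : {set T}) a lo hi : a \in A ->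
  window_count A lo hi = (window_count (A :\ a) (lo + (w a)%:Z) (hi + (w a)%:Z)
                          + window_count (A :\ a) (lo - (w a)%:Z) (hi - (w a)%:Z))%N.
Proof.
move=> aA; rewrite /window_count (sum_powersetD1 _ aA) big_split /=.
congr (_ + _)%N; apply: eq_bigr => J; rewrite inE subsetD1 => /andP[_ aJ];
  rewrite /signed_sum ?wsumU1 // (wsumD1 aA); congr (nat_of_bool _); lia.
Qed.

Lemma window_count_widen (A : {set T}) lo hi lo' hi' : lo <= lo' -> hi' <= hi ->
  (window_count A lo' hi' <= window_count A lo hi)%N.
Proof. by move=> le_lo le_hi; apply: leq_sum => I _; lia. Qed.

Lemma window_count_exchange (A : {set T}) lo1 hi1 lo2 hi2 :
  lo1 <= lo2 -> lo2 <= hi1 -> hi1 <= hi2 ->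
  (window_count A lo1 hi1 + window_count A lo2 hi2
   = window_count A lo1 hi2 + window_count A lo2 hi1)%N.
Proof. by move=> *; rewrite /window_count -!big_split /=; apply: eq_bigr => I _; lia. Qed.

(* Erdos' induction: remove the largest weight [w b].  The two shifted windows of
   [window_count_split] are exchanged into a wider and a narrower window, both
   centred at a point [y] of [[-w b, w b)]; this is the recursion [nwalksSS]. *)
Lemma nwalks_le_window_count k (A : {set T}) (M : nat) (x : int) (j : nat) :
  #|A| = k -> {in A, forall i, 0 < w i <= M}%N -> (0 < j)%N -> - M%:Z <= x < M%:Z ->
  (nwalks k j <= window_count A (x - (j * M)%N%:Z) (x + (j * M)%N%:Z))%N.
Proof.
elim: k A M x j => [|k IHk] A M x j cardA w_range j_gt0 x_range.
  move/cards0_eq: cardA => ->; rewrite nwalks0n j_gt0.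
  by rewrite /window_count powerset0 big_set1 /signed_sum /wsum !big_set0; nia.
case: j j_gt0 => // j _.
have [a aA] : exists a, a \in A by apply/card_gt0P; rewrite cardA.
case: (arg_maxnP w aA) => b bA b_max; have {}bA : b \in A by [].
set A' := A :\ b.
have cardA' : #|A'| = k by move: cardA; rewrite (cardsD1 b) bA => -[].
have w'_range : {in A', forall i, 0 < w i <= w b}%N.
  move=> i; rewrite inE => /andP[_ iA]; have /andP[-> _] := w_range i iA.
  exact: b_max.
have /andP[wb_gt0 wb_le] := w_range b bA.
have [y y_range y_near] : exists2 y : int, - (w b)%:Z <= y < (w b)%:Z &
    x - (M%:Z - (w b)%:Z) <= y <= x + (M%:Z - (w b)%:Z).
  by exists (Num.max (- (w b)%:Z) (Num.min x ((w b)%:Z - 1))); lia.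
rewrite (window_count_split _ _ bA) addnC window_count_exchange -/A' ?nwalksSS; [|nia..].
apply: leq_add.
  apply: leq_trans (IHk A' (w b) y j.+2 cardA' w'_range isT y_range) _.
  by apply: window_count_widen; nia.
case: j => [|j]; first by rewrite nwalks0.
apply: leq_trans (IHk A' (w b) y j.+1 cardA' w'_range isT y_range) _.
by apply: window_count_widen; nia.
Qed.

Lemma mid_binomial_le_window_count (A : {set T}) (M : nat) :
  (0 < M)%N -> {in A, forall i, 0 < w i <= M}%N ->
  ('C(#|A|, #|A|./2) <= window_count A (- M%:Z) M%:Z)%N.
Proof.
move=> M_gt0 w_range; apply: leq_trans (mid_binomial_le_nwalks _) _.
have := nwalks_le_window_count (x := 0) (j := 1) erefl w_range isT.
by rewrite mul1n !GRing.add0r; apply; lia.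
Qed.

Lemma wsumS (I A : {set T}) : I \subset A -> (wsum I <= wsum A)%N.
Proof.
move=> sIA; rewrite /wsum [X in (_ <= X)%N](big_setID I) /= (setIidPr sIA).
exact: leq_addr.
Qed.

Lemma window_count_le_mul (A : {set T}) (g M : nat) :
  (forall t, #|[set I : {set T} | I \subset A & wsum I == t]| <= g)%N ->
  (window_count A (- M%:Z) M%:Z <= g * M)%N.
Proof.
move=> fibre_le; pose in_window t := (- M%:Z < 2 * t%:Z - (wsum A)%:Z <= M%:Z) : nat.
rewrite /window_count (sum_by_fibres in_window (h := wsum) (m := (wsum A).+1)); last first.
  by move=> I; rewrite inE ltnS; apply: wsumS.
apply: leq_trans (_ : _ <= \sum_(t < (wsum A).+1) g * in_window t)%N _.
  apply: leq_sum => t _; rewrite leq_mul2r; apply/orP; right.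
  by apply: leq_trans (fibre_le t); apply: subset_leq_card; apply/subsetP => I; rewrite !inE.
rewrite -big_distrr leq_mul2l; apply/orP; right.
apply: leq_trans (sum_parity_window_le _ (wsum A) M).
by apply: leq_sum => t _; rewrite /in_window; lia.
Qed.
End SignedSubsetSums.

Lemma Sn_prefix_set S n : ~~ S 0 -> Sn S n = prefix_set S n.
Proof. by move=> S0; apply/setP => -[[|i] lt_i]; rewrite !inE //= (negbTE S0). Qed.

Lemma mid_binomial_le_of_D_set g S n : (0 < n)%N -> ~~ S 0 -> D_set g S ->
  ('C(#|Sn S n|, #|Sn S n|./2) <= g * n)%N.
Proof.
move=> n_gt0 S0 Dg.
have ub : window_count (@nat_of_ord n.+1) (Sn S n) (- n%:Z)%R n%:Z <= g * n.
  by apply: window_count_le_mul => t; rewrite Sn_prefix_set //; apply: Dg.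
apply: leq_trans ub; apply: mid_binomial_le_window_count => // i.
by rewrite inE => /andP[i_gt0 _]; rewrite i_gt0 -ltnS ltn_ord.
Qed.

Lemma central_bin_rec m : 'C(m.+1.*2, m.+1) * m.+1 = 2 * m.*2.+1 * 'C(m.*2, m).
Proof.
apply/eqP; rewrite -(eqn_pmul2l (ltn0Sn m)).
have := mul_bin_diag m.+1.*2 m; have := mul_bin_down m.*2.+1 m.
rewrite doubleS /= -addnn; nia.
Qed.

Lemma central_bin_odd m : 'C(m.+1.*2, m.+1) = 2 * 'C(m.*2.+1, m).
Proof.
rewrite doubleS binS -[in 'C(_, m.+1)](@bin_sub m.*2.+1 m.+1) ?subSS; last lia.
by rewrite -addnn addnK mul2n addnn.
Qed.

Module Wallis.
Import Coquelicot.Coquelicot.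
Local Open Scope R_scope.

Definition W (n : nat) : R := RInt (fun x => sin x ^ n) 0 (PI / 2).

Lemma ex_RInt_W n : ex_RInt (fun x => sin x ^ n) 0 (PI / 2).
Proof.
apply: ex_RInt_continuous => x _.
by apply: ex_derive_continuous; auto_derive.
Qed.

Lemma W0 : W 0 = PI / 2.
Proof. by rewrite /W RInt_const /scal /= /mult /=; ring. Qed.

Lemma W1 : W 1 = 1.
Proof.
rewrite /W (is_RInt_unique _ _ _ _ (@is_RInt_derive _ (fun x => - cos x) _ _ _ _ _)).
- by rewrite cos_PI2 cos_0 /minus /plus /opp /=; ring.
- by move=> x _; auto_derive => //; ring.
- by move=> x _; apply: ex_derive_continuous; auto_derive.
Qed.

(* Integration by parts, with [cos^2 = 1 - sin^2]. *)
Lemma W_rec n : INR (n + 2) * W (n + 2) = INR (n + 1) * W n.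
Proof.
pose F x := INR (n + 2) * sin x ^ (n + 2) - INR (n + 1) * sin x ^ n.
have F_int : is_RInt F 0 (PI / 2) (INR (n + 2) * W (n + 2) - INR (n + 1) * W n).
  by apply: (is_RInt_minus (V := R_CompleteNormedModule)); apply: is_RInt_scal;
    apply: RInt_correct; apply: ex_RInt_W.
have F_deriv : is_RInt F 0 (PI / 2)
    (minus (- (sin (PI / 2) ^ (n + 1) * cos (PI / 2))) (- (sin 0 ^ (n + 1) * cos 0))).
  apply: (is_RInt_derive (fun x => - (sin x ^ (n + 1) * cos x))) => x _.
    auto_derive => //; rewrite /F !addn1 !addn2 !S_INR /=.
    have cos2 : cos x * cos x = 1 - sin x * sin x by have := sin2_cos2 x; rewrite /Rsqr; lra.
    transitivity ((INR n + 1) * sin x ^ n * - (cos x * cos x) + sin x * sin x * sin x ^ n).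
      by ring.
    by rewrite cos2; ring.
  by rewrite /F; apply: ex_derive_continuous; auto_derive.
move: (is_RInt_unique _ _ _ _ F_int) (is_RInt_unique _ _ _ _ F_deriv).
rewrite cos_PI2 sin_0 pow_i; last by lia.
rewrite /minus /plus /opp /=; lra.
Qed.

Lemma W_ge0 n : 0 <= W n.
Proof.
apply: RInt_ge_0; [have := PI_RGT_0; lra | exact: ex_RInt_W |].
move=> x x_range; apply: pow_le; apply: sin_ge_0; have := PI_RGT_0; lra.
Qed.

Lemma W_S_le n : W n.+1 <= W n.
Proof.
apply: RInt_le; [have := PI_RGT_0; lra | exact: ex_RInt_W | exact: ex_RInt_W |].
move=> x x_range /=.
have sin_ge0 : 0 <= sin x by apply: sin_ge_0; have := PI_RGT_0; lra.
have sin_le1 : sin x <= 1 by have := SIN_bound x; lra.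
have := pow_le _ n sin_ge0; nra.
Qed.

Lemma W_prod n : INR (n + 1) * W n * W n.+1 = PI / 2.
Proof.
elim: n => [|n IHn]; first by rewrite W0 W1 /=; field.
rewrite -IHn -[INR (n + 1) * W n](W_rec n) !addn1 !addn2; ring.
Qed.

Lemma W_sq_lb n : PI / 2 <= INR (n + 1) * W n ^ 2.
Proof.
rewrite -(W_prod n) /= Rmult_1_r -Rmult_assoc.
apply: Rmult_le_compat_l; last exact: W_S_le.
apply: Rmult_le_pos; [exact: pos_INR | exact: W_ge0].
Qed.

Lemma W_even m : W m.*2 * 4 ^ m = PI / 2 * INR 'C(m.*2, m).
Proof.
elim: m => [|m IHm]; first by rewrite W0 /=; ring.
have rec := W_rec m.*2; rewrite !addn1 !addn2 -doubleS in rec.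
have bin := central_bin_rec m; move/(congr1 INR): bin; rewrite !mult_INR => bin.
have {}rec : 2 * INR m.+1 * W m.+1.*2 = INR m.*2.+1 * W m.*2.
  by rewrite -rec -mul2n mult_INR.
apply: (Rmult_eq_reg_r (INR m.+1)); last exact: not_0_INR.
rewrite [RHS]Rmult_assoc bin; transitivity (2 * (2 * INR m.+1 * W m.+1.*2) * 4 ^ m).
  by rewrite /=; ring.
rewrite rec; transitivity (2 * INR m.*2.+1 * (W m.*2 * 4 ^ m)); first ring.
by rewrite IHm /=; ring.
Qed.

End Wallis.

Section CentralBinomial.
Local Open Scope R_scope.

Lemma central_binomial_lb m : 2 * 16 ^ m <= INR 'C(m.*2, m) ^ 2 * PI * INR m.*2.+1.
Proof.
have pi_gt0 := PI_RGT_0.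
have lb := Rmult_le_compat_r _ _ _ (pow2_ge_0 (4 ^ m)) (Wallis.W_sq_lb m.*2).
rewrite addn1 Rmult_assoc -Rpow_mult_distr Wallis.W_even in lb.
rewrite (_ : 16 = 4 * 4); last ring.
rewrite Rpow_mult_distr.
apply: (Rmult_le_reg_l (PI / 4)); first lra.
have -> : PI / 4 * (2 * (4 ^ m * 4 ^ m)) = PI / 2 * (4 ^ m) ^ 2 by field.
by apply: (Rle_trans _ _ _ lb); right; field.
Qed.

Lemma mid_binomial_lb k : 2 * 4 ^ k <= INR 'C(k, k./2) ^ 2 * PI * INR k.+2.
Proof.
have pi_gt0 := PI_RGT_0.
have pow16 j : 16 ^ j = 4 ^ j.*2 by rewrite -mul2n pow_mult; congr (_ ^ _); ring.
move: (odd_double_half k); set j := k./2; case: (odd k) => <-; rewrite ?add1n ?add0n.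
- have := central_binomial_lb j.+1.
  rewrite central_bin_odd mult_INR pow16 doubleS -tech_pow_Rmult.
  by rewrite (_ : INR 2 = 2) //; lra.
- have := central_binomial_lb j; rewrite pow16.
  have c_ge0 : 0 <= INR 'C(j.*2, j) ^ 2 * PI by have := pow2_ge_0 (INR 'C(j.*2, j)); nra.
  have := Rmult_le_compat_l _ _ _ c_ge0 (le_INR _ _ (Nat.le_succ_diag_r j.*2.+1)); lra.
Qed.

End CentralBinomial.

Section Asymptotics.
Local Open Scope R_scope.

Lemma ln_le_sub1 x : 0 < x -> ln x <= x - 1.
Proof. by move=> x_gt0; have := exp_ineq1_le (ln x); rewrite exp_ln //; lra. Qed.

Lemma ln_le_affine d x : 0 < d -> 0 < x -> ln x <= d * x - 1 - ln d.
Proof.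
move=> d_gt0 x_gt0; have := ln_le_sub1 (Rmult_lt_0_compat _ _ d_gt0 x_gt0).
by rewrite ln_mult //; lra.
Qed.

(* With [d = (q - 1) / q], [ln x <= d x - 1 - ln d] turns the hypothesis into
   [(q + 1) x / q <= 2 (u + C)]. *)
Lemma le_mul_of_le_add_ln c q : 1 < q -> exists U, forall u x,
  U <= u -> 0 < x -> x <= u + c + ln x / 2 -> x <= q * u.
Proof.
move=> q_gt1; pose d := (q - 1) / q; pose C := c - (1 + ln d) / 2.
have d_gt0 : 0 < d by apply: Rdiv_lt_0_compat; lra.
exists (2 * C / (q - 1)) => u x le_Uu x_gt0 x_le.
have {}le_Uu : 2 * C <= (q - 1) * u.
  by move/Rcomplements.Rle_div_l: le_Uu => /(_ ltac:(lra)); lra.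
have ln_x := ln_le_affine d_gt0 x_gt0.
pose y := x / q; have x_eq : x = q * y by rewrite /y; field; lra.
have d_x : d * x = q * y - y by rewrite /d x_eq /y; field; lra.
have le_yu : y <= u by apply: (Rmult_le_reg_l (q + 1)); rewrite /C in le_Uu; lra.
by rewrite x_eq; apply: Rmult_le_compat_l; lra.
Qed.

Lemma ln_bound_of_mid_binomial_le g n K : (0 < g)%N -> (0 < n)%N ->
  ('C(K, K./2) <= g * n)%N ->
  INR K * ln 2 <= ln (INR n) + ln (INR g) + (ln PI - ln 2) / 2 + ln (INR K + 2) / 2.
Proof.
move=> g_gt0 n_gt0 /leP/le_INR; rewrite mult_INR => bin_le.
have pi_gt0 := PI_RGT_0.
have g_pos : 0 < INR g by apply: lt_0_INR; apply/ltP.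
have n_pos : 0 < INR n by apply: lt_0_INR; apply/ltP.
have K2_pos : 0 < INR K + 2 by have := pos_INR K; lra.
have bound : 2 * 4 ^ K <= (INR g * INR n) ^ 2 * PI * (INR K + 2).
  apply: Rle_trans (mid_binomial_lb K) _; rewrite !S_INR -Rplus_assoc.
  apply: Rmult_le_compat_r; first lra; apply: Rmult_le_compat_r; first lra.
  by apply: pow_incr; split; [apply: pos_INR | exact: bin_le].
have pow4_pos : 0 < 4 ^ K by apply: pow_lt; lra.
have sq_pos : 0 < (INR g * INR n) ^ 2 by apply: pow_lt; apply: Rmult_lt_0_compat.
have ln4 : ln 4 = 2 * ln 2 by rewrite (_ : 4 = 2 * 2); [rewrite ln_mult; lra | ring].
have := Rcomplements.ln_le _ _ (ltac:(lra) : 0 < 2 * 4 ^ K) bound.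
rewrite (ln_mult _ _ Rlt_0_2 pow4_pos) (ln_pow _ (ltac:(lra) : 0 < 4)) ln4.
rewrite (ln_mult _ _ (Rmult_lt_0_compat _ _ sq_pos pi_gt0) K2_pos) (ln_mult _ _ sq_pos pi_gt0).
have gn_pos : 0 < INR g * INR n by apply: Rmult_lt_0_compat.
by rewrite (ln_pow _ gn_pos) (ln_mult _ _ g_pos n_pos) /=; lra.
Qed.

Lemma ln_sqrt x : 0 < x -> ln (sqrt x) = ln x / 2.
Proof. by move=> x_gt0; rewrite -Rpower_sqrt // ln_Rpower; field. Qed.

Lemma log2_bound_of_ln_bound (n g K : nat) eps : 0 < ln (INR n) ->
  INR K * ln 2 <= ln (INR n) + ln (INR g) + (ln PI - ln 2) / 2
                  + (ln (ln (INR n)) - ln (ln 2)) / 2 + eps * ln 2 ->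
  INR K <= log2 (INR n) + / 2 * log2 (log2 (INR n)) + log2 (INR g)
           - log2 (sqrt (2 / PI)) + eps.
Proof.
move=> u_gt0 bound; have a_gt := ln_lt_2; have pi_gt0 := PI_RGT_0.
rewrite /log2 Rcomplements.ln_div ?ln_sqrt ?Rcomplements.ln_div; try lra;
  last by apply: Rdiv_lt_0_compat; lra.
apply: (Rmult_le_reg_r (ln 2)); first lra.
by apply: (Rle_trans _ _ _ bound); right; field; lra.
Qed.

Lemma log2_bound_of_mid_binomial_le g eps : (0 < g)%N -> 0 < eps ->
  exists N : nat, forall n K : nat, (N <= n)%N -> ('C(K, K./2) <= g * n)%N ->
    INR K <= log2 (INR n) + / 2 * log2 (log2 (INR n)) + log2 (INR g)
             - log2 (sqrt (2 / PI)) + eps.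
Proof.
move=> g_gt0 eps_gt0; have := ln_lt_2; set a := ln 2 => a_gt.
pose q := exp (2 * eps * a).
have q_gt1 : 1 < q by have := exp_ineq1 (2 * eps * a); rewrite /q; nra.
have [U HU] := le_mul_of_le_add_ln (ln (INR g) + (ln PI - a) / 2 + 2 * a - ln a / 2) q_gt1.
have [N N_gt] := INR_unbounded (exp (Rmax U 1)).
exists N => n K le_Nn bin_le.
have n_large : exp (Rmax U 1) < INR n.
  by apply: Rlt_le_trans N_gt (le_INR _ _ (elimT leP le_Nn)).
have n_gt0 : (0 < n)%N by apply/ltP; apply: INR_lt; have := exp_pos (Rmax U 1); rewrite /=; lra.
have u_large : Rmax U 1 < ln (INR n).
  by rewrite -[X in X < _]ln_exp; apply: ln_increasing => //; apply: exp_pos.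
set u := ln (INR n) in u_large *.
have [u_ge1 u_geU] := (Rmax_r U 1, Rmax_l U 1).
apply: log2_bound_of_ln_bound; rewrite -/a -/u; first lra.
have lnK := ln_bound_of_mid_binomial_le g_gt0 n_gt0 bin_le; rewrite -/a -/u in lnK.
(* For [x = a (K + 2)], [lnK] reads [x <= u + c + ln x / 2]; hence [x <= q u],
   i.e. [ln x <= 2 eps a + ln u]. *)
have x_pos : 0 < a * (INR K + 2) by have := pos_INR K; nra.
have ln_x : ln (a * (INR K + 2)) = ln a + ln (INR K + 2).
  by rewrite ln_mult //; have := pos_INR K; lra.
have := HU u _ (ltac:(lra) : U <= u) x_pos (ltac:(lra)).
move/(Rcomplements.ln_le _ _ x_pos).
rewrite /q (ln_mult _ _ (exp_pos _) (ltac:(lra) : 0 < u)) ln_exp ln_x; lra.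
Qed.

End Asymptotics.

(* Importing [all_algebra] rebound the [%R] delimiter to [ring_scope]. *)
Delimit Scope R_scope with R.

Theorem corollary2 (g : nat) (S : pred nat) :
  (1 <= g)%N -> ~~ S 0 -> D_set g S ->
  forall eps : R, (0 < eps)%R ->
  exists N : nat, forall n : nat, (N <= n)%N ->
    (INR #|Sn S n| <=
       log2 (INR n) + / 2 * log2 (log2 (INR n)) + log2 (INR g)
       - log2 (sqrt (2 / PI)) + eps)%R.
Proof.
move=> g_gt0 S0 Dg eps eps_gt0.
have [N bound] := log2_bound_of_mid_binomial_le g_gt0 eps_gt0.
exists N.+1 => n lt_Nn; apply: bound; first exact: ltnW.
by apply: mid_binomial_le_of_D_set => //; apply: leq_ltn_trans lt_Nn.
Qed.
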